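(* Let $p$ be a prime, let $\Gamma$ be a finite connected $p$-valent arc-transitive graph, and let $G\le \mathrm{Aut}(\Gamma)$ be a solvable group acting transitively on the arcs of $\Gamma$. Then $G$, as a permutation group on the vertex set of $\Gamma$, has the EKR property.
   Context: For a permutation group $G$ on a finite set $V$, a subset $\mathcal{F}\subseteq G$ is intersecting if for all $g,h\in\mathcal{F}$ there is $v\in V$ with $g(v)=h(v)$. $G$ has the Erdős–Ko–Rado (EKR) property if the maximum size of an intersecting set of $G$ equals the maximum order of a point stabilizer $G_v$, $v\in V$. *)

From mathcomp Require Import all_boot all_fingroup all_solvable.
Set Implicit Arguments.
Unset Strict Implicit.
Unset Printing Implicit Defensive.
Local Open Scope group_scope.

Section EKR.
Variable V : finType.

Definition intersecting (G F : {set {perm V}}) : bool :=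
  (F \subset G) && [forall g in F, forall h in F, exists v, g v == h v].

Definition max_intersecting (G : {set {perm V}}) : nat :=
  \max_(F : {set {perm V}} | intersecting G F) #|F|.

Definition max_stabilizer (G : {group {perm V}}) : nat :=
  \max_(v : V) #|'C_G[v | 'P]|.

Definition EKR_property (G : {group {perm V}}) : Prop :=
  max_intersecting G = max_stabilizer G.

Definition simple_graph (e : rel V) : Prop :=
  irreflexive e /\ symmetric e.

Definition graph_connected (e : rel V) : Prop :=
  forall u v : V, connect e u v.

Definition regular_of_valency (e : rel V) (k : nat) : Prop :=
  forall v : V, #|[set w | e v w]| = k.

Definition automorphism_group (e : rel V) (G : {set {perm V}}) : Prop :=
  forall g, g \in G -> forall u v : V, e (g u) (g v) = e u v.

Definition arc_transitive_on (e : rel V) (G : {set {perm V}}) : Prop :=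
  forall u v x y : V, e u v -> e x y ->
    exists2 g, g \in G & (g u = x /\ g v = y).

End EKR.

(* A permutation group G containing a sharply transitive subset S
   has the EKR property: for an intersecting set F the products f^-1 * s
   (f in F, s in S) are pairwise distinct, so |F| |S| <= |G|, i.e. |F| <= |G_v|.
   Such an S is built by induction on the number of vertices.  As G is solvable,
   some normal subgroup N of G acts nontrivially while its derived subgroup acts
   trivially, so the point stabilisers of N are normal in N.  If at most two
   N-orbits cover the vertices, a common right transversal of two such (equal
   order) stabilisers, multiplied by a sharply transitive set on the orbits,
   works.  Otherwise the prime valency forces the neighbours of a vertex to lie
   in distinct N-orbits; then N is semiregular modulo its kernel, and the normal
   quotient graph is a smaller connected p-valent G-arc-transitive graph whose
   sharply transitive set lifts through a transversal of the kernel in N. *)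

From mathcomp Require Import all_boot all_fingroup all_solvable.
Set Implicit Arguments.
Unset Strict Implicit.
Unset Printing Implicit Defensive.
Local Open Scope group_scope.

Section SharplyTransitive.
Variables (gT : finGroupType) (T : finType) (to : {action gT &-> T}).

Definition sharply_transitive (G : {set gT}) (D : {set T}) (S : {set gT}) :=
  [/\ S \subset G, #|S| = #|D| & {in D, forall x, {in S &, injective (to x)}}].

Lemma sharply_transitive_pair (G : {group gT}) u v :
  [transitive G, on [set u; v] | to] -> exists S, sharply_transitive G [set u; v] S.
Proof.
move=> trG; have [<- | uv] := eqVneq u v.
  exists [set 1]; split; rewrite ?sub1set ?group1 ?setUid ?cards1 //.
  by move=> x _ s t /set1P-> /set1P->.
have [g Gg vE] := atransP2 trG (set21 u v) (set22 u v).
have uE : to v g = u.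
  have /set2P[] // : to v g \in [set u; v] by rewrite (actsP (atrans_acts trG)) ?set22.
  by rewrite {2}vE => /act_inj vu; rewrite vu eqxx in uv.
have g_moves x : x \in [set u; v] -> to x g != x.
  by case/set2P=> ->; rewrite -?vE ?uE // eq_sym.
exists [set 1; g]; split.
- by rewrite subUset !sub1set group1.
- have g1 : 1 != g by apply: contraNneq (g_moves u (set21 u v)) => <-; rewrite act1.
  by rewrite !cards2 uv g1.
move=> x Dx s t /set2P[] -> /set2P[] -> // E; have := g_moves x Dx.
  by rewrite -E act1 eqxx.
by rewrite E act1 eqxx.
Qed.

End SharplyTransitive.

Section EKR.
Variables (V : finType) (G : {group {perm V}}).

Lemma clique_coclique_bound (S F : {set {perm V}}) :
    S \subset G -> {in S &, forall s t : {perm V}, forall v, s v = t v -> s = t} ->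
  intersecting G F -> (#|S| * #|F| <= #|G|)%N.
Proof.
move=> sSG injS /andP[sFG /forall_inP agreeF].
(* If f and f' agree at v and f^-1 * s = f'^-1 * t, then s and t agree at v. *)
rewrite -cardsX -(@card_in_imset _ _ (fun sf => sf.2^-1 * sf.1)).
  apply/subset_leq_card/subsetP => _ /imsetP[[s f] /setXP[Ss Ff] ->].
  by rewrite /= groupM ?groupV //; [apply: (subsetP sFG) | apply: (subsetP sSG)].
move=> [s f] [t f'] /setXP[Ss Ff] /setXP[St Ff'] /= E.
have /forall_inP/(_ f' Ff')/existsP[v /eqP fv] := agreeF f Ff.
have st : s = t.
  apply: (injS s t Ss St v); have := congr1 (fun g : {perm V} => g (f v)) E.
  by rewrite !permM permK fv permK.
by move: E; rewrite st => /mulIg/invg_inj ->.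
Qed.

Lemma sharply_transitive_EKR S : sharply_transitive 'P G [set: V] S -> EKR_property G.
Proof.
case=> sSG cardS injS.
have {}injS : {in S &, forall s t : {perm V}, forall v, s v = t v -> s = t}.
  by move=> s t Ss St v; apply: injS (in_setT v) s t Ss St.
have orbitT v : orbit 'P G v = [set: V].
  apply/eqP; rewrite eqEcard subsetT -cardS.
  rewrite -(@card_in_imset _ _ (fun s : {perm V} => s v)) => [|s t Ss St]; last exact: injS.
  apply/subset_leq_card/subsetP => _ /imsetP[s Ss ->].
  exact: (mem_orbit 'P v (subsetP sSG s Ss)).
have card_stab v : (#|V| * #|'C_G[v | 'P]|)%N = #|G|.
  by rewrite -cardsT -(orbitT v) card_orbit_stab.
have stab_intersecting v : intersecting G 'C_G[v | 'P].
  rewrite /intersecting subsetIl; apply/forall_inP => g /setIP[_ /astab1P gv].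
  apply/forall_inP => h /setIP[_ /astab1P hv]; apply/existsP; exists v.
  by move: gv hv; rewrite /= !apermE => -> ->.
apply/eqP; rewrite eqn_leq; apply/andP; split; apply/bigmax_leqP.
  move=> F iF; have [-> | [f Ff]] := set_0Vmem F; first by rewrite cards0.
  have /andP[_ /forall_inP/(_ f Ff)/forall_inP/(_ f Ff)/existsP[v _]] := iF.
  have V_gt0 : 0 < #|V| by apply/card_gt0P; exists v.
  apply: leq_trans (leq_bigmax v); rewrite -(leq_pmul2l V_gt0) card_stab -cardsT -cardS.
  exact: clique_coclique_bound.
by move=> v _; apply: (leq_bigmax_cond _ (stab_intersecting v)).
Qed.

End EKR.

Lemma card_eq_inj_exists (T : finType) (A B : {set T}) :
  #|A| = #|B| -> exists2 f : T -> T, {in A, forall x, f x \in B} & {in A &, injective f}.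
Proof.
move=> cardAB; have [B0 | [b0 Bb0]] := set_0Vmem B.
  by exists id => x; move: cardAB; rewrite B0 cards0 => /eqP; rewrite cards_eq0 => /eqP->.
have index_lt x : x \in A -> index x (enum A) < size (enum B).
  by move=> Ax; rewrite -cardE -cardAB cardE index_mem mem_enum.
exists (fun x => nth b0 (enum B) (index x (enum A))) => [x Ax | x y Ax Ay].
  by rewrite -mem_enum mem_nth ?index_lt.
move/eqP; rewrite nth_uniq ?enum_uniq ?index_lt // => /eqP/(congr1 (nth x (enum A))).
by rewrite !nth_index ?mem_enum.
Qed.

Section FiniteGroups.
Variable gT : finGroupType.
Implicit Types (A H K M N : {group gT}) (R X Y : {set gT}).

Lemma rtransversal_exists H N : H \subset N ->
  exists2 X : {set gT}, X \subset N & #|X| = #|N : H| /\ {in X &, injective (rcoset H)}.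
Proof.
move=> sHN; have reprK : {in rcosets H N, cancel repr (rcoset H)}.
  by move=> _ /rcosetsP[x _ ->]; rewrite rcosetE rcoset_repr.
exists (repr @: rcosets H N); last first.
  split; first by rewrite card_in_imset //; apply: can_in_inj reprK.
  by move=> _ _ /imsetP[C NC ->] /imsetP[D ND ->]; rewrite !reprK // => ->.
apply/subsetP => _ /imsetP[_ /rcosetsP[x Nx ->] ->].
by case/rcosetP: (mem_repr_rcoset H x) => h Hh ->; rewrite groupM //; apply: (subsetP sHN).
Qed.

Lemma rcoset_setI_eq H K x y :
  x \in K -> y \in K -> H :* x = H :* y -> (H :&: K) :* x = (H :&: K) :* y.
Proof.
move=> Kx Ky /rcoset_eqP; rewrite mem_rcoset => Hxy.
by apply/rcoset_eqP; rewrite mem_rcoset inE Hxy groupM ?groupV.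
Qed.

Lemma rtransversal_mul A M Y R :
    A \subset M -> Y \subset M -> {in Y &, injective (rcoset A)} ->
    {in R &, injective (rcoset M)} ->
  {in Y * R &, injective (rcoset A)} /\ #|Y * R| = (#|Y| * #|R|)%N.
Proof.
move=> sAM sYM injY injR.
have key y y' r r' : y \in Y -> y' \in Y -> r \in R -> r' \in R ->
    A :* (y * r) = A :* (y' * r') -> y = y' /\ r = r'.
  move=> Yy Yy' Rr Rr' /rcoset_eqP; rewrite mem_rcoset invMg => Ayr.
  have [My My'] := (subsetP sYM y Yy, subsetP sYM y' Yy').
  have rr' : r = r'.
    apply: injR => //; rewrite !rcosetE; apply/rcoset_eqP; rewrite mem_rcoset.
    have := subsetP sAM _ Ayr; rewrite mulgA -(mulgA y) groupMr ?groupV //.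
    by rewrite groupMl.
  split=> //; apply: injY => //; rewrite !rcosetE; apply/rcoset_eqP.
  by rewrite mem_rcoset; move: Ayr; rewrite rr' mulgA mulgK.
split.
  move=> _ _ /imset2P[y r Yy Rr ->] /imset2P[y' r' Yy' Rr' ->].
  by rewrite !rcosetE => /key[] // -> ->.
rewrite -[Y * R]/[set y * r | y in Y, r in R] curry_imset2X card_in_imset ?cardsX //.
move=> [y r] [y' r'] /setXP[Yy Rr] /setXP[Yy' Rr'] /= E.
by have [-> ->] := key y y' r r' Yy Yy' Rr Rr' (congr1 (fun z => A :* z) E).
Qed.

Lemma common_rtransversal_join H K : H \subset 'N(K) -> #|H| = #|K| ->
  exists2 Y : {set gT}, Y \subset H <*> K & [/\ #|Y| = #|K : H|,
    {in Y &, injective (rcoset H)} & {in Y &, injective (rcoset K)}].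
Proof.
move=> nKH cardHK.
have [X1 sX1H [cardX1 injX1]] := rtransversal_exists (subsetIl H K).
have [X2 sX2K [cardX2 injX2]] := rtransversal_exists (subsetIr H K).
have cardX12 : #|X1| = #|X2|.
  apply/eqP; rewrite -(eqn_pmul2l (cardG_gt0 (H :&: K))) cardX1 cardX2.
  by rewrite !Lagrange ?subsetIl ?subsetIr ?cardHK.
have [f fX12 injf] := card_eq_inj_exists cardX12.
(* x * f x lies in the H-coset of f x and, K being normalised by H, in the
   K-coset of x. *)
have X1H x : x \in X1 -> x \in H by move/(subsetP sX1H).
have fK x : x \in X1 -> f x \in K by move/fX12/(subsetP sX2K).
have Hcoset x : x \in X1 -> H :* (x * f x) = H :* f x.
  by move/X1H => Hx; rewrite rcosetM (rcoset_id Hx).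
have Kcoset x : x \in X1 -> K :* (x * f x) = K :* x.
  move=> X1x; apply/rcoset_eqP; rewrite mem_rcoset.
  have : f x ^ x^-1 \in K by rewrite memJ_norm ?fK ?groupV ?(subsetP nKH) ?X1H.
  by rewrite conjgE invgK mulgA.
have injH : {in X1 &, forall x y, H :* f x = H :* f y -> x = y}.
  move=> x y X1x X1y /(rcoset_setI_eq (fK x X1x) (fK y X1y)) E.
  by apply: injf => //; apply: injX2; rewrite ?fX12 // !rcosetE.
have injK : {in X1 &, forall x y, K :* x = K :* y -> x = y}.
  move=> x y X1x X1y /(rcoset_setI_eq (X1H x X1x) (X1H y X1y)) E.
  by apply: injX1; rewrite // !rcosetE /= setIC.
exists [set x * f x | x in X1].
  apply/subsetP => _ /imsetP[x X1x ->].
  have HKx := subsetP (joing_subl H K) _ (X1H x X1x).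
  by rewrite groupM // (subsetP (joing_subr H K) _ (fK x X1x)).
split.
- rewrite card_in_imset; first by rewrite cardX12 cardX2 /= setIC indexgI.
  move=> x y X1x X1y /(congr1 (fun z => H :* z)).
  by rewrite !Hcoset //; apply: injH.
- move=> _ _ /imsetP[x X1x ->] /imsetP[y X1y ->].
  by rewrite !rcosetE !Hcoset // => /injH-> //.
- move=> _ _ /imsetP[x X1x ->] /imsetP[y X1y ->].
  by rewrite !rcosetE !Kcoset // => /injK-> //.
Qed.

Lemma common_rtransversal N H K : H <| N -> K <| N -> #|H| = #|K| ->
  exists2 X : {set gT}, X \subset N & [/\ #|X| = #|N : H|,
    {in X &, injective (rcoset H)} & {in X &, injective (rcoset K)}].
Proof.
case/andP=> sHN nHN /andP[sKN nKN] cardHK.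
have nKH := subset_trans sHN nKN; have nHK := subset_trans sKN nHN.
have [Y sYM [cardY injYH injYK]] := common_rtransversal_join nKH cardHK.
have sMN : H <*> K \subset N by rewrite join_subG sHN.
have [R sRN [cardR injR]] := rtransversal_exists sMN.
have [injH cardYR] := rtransversal_mul (joing_subl H K) sYM injYH injR.
have [injK _] := rtransversal_mul (joing_subr H K) sYM injYK injR.
exists (Y * R); first by rewrite mul_subG // (subset_trans sYM).
split=> //; apply/eqP; rewrite -(eqn_pmul2l (cardG_gt0 H)) cardYR mulnA cardY cardR.
by rewrite LagrangeMl -norm_joinEr // (Lagrange sMN) (Lagrange sHN).
Qed.

Lemma solvable_normal_der1_sub (G A : {group gT}) : solvable G -> ~~ (G \subset A) ->
  exists2 N : {group gT}, N <| G & ~~ (N \subset A) /\ N^`(1) \subset A.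
Proof.
move=> /derivedP[m Gm1] nsGA.
have exA : exists i, G^`(i) \subset A by exists m; rewrite Gm1 sub1G.
have [i sGiA min_i] := ex_minnP exA.
have i_gt0 : 0 < i by case: i sGiA {min_i} => //; rewrite derg0 (negPf nsGA).
exists G^`(i.-1)%G; first exact: der_normal.
split; last by rewrite derg1 -dergSn prednK.
by apply/negP => /min_i; rewrite -ltnS prednK // ltnn.
Qed.

End FiniteGroups.

Section NormalSubgroupOrbits.
Variables (gT : finGroupType) (T : finType) (to : {action gT &-> T}).
Implicit Types (G N : {group gT}) (D : {set T}) (S X : {set gT}).

Lemma act_inj_rcoset_stab N X x :
  X \subset N -> {in X &, injective (rcoset 'C_N[x | to])} -> {in X &, injective (to x)}.
Proof.
move=> sXN injX a b Xa Xb E; apply: injX => //; rewrite !rcosetE; apply/rcoset_eqP.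
rewrite mem_rcoset; apply/setIP; split; last by apply/astab1P; rewrite actM E actK.
by rewrite groupM ?groupV //; apply: (subsetP sXN).
Qed.

Lemma stab_orbit_normal N x y :
  'C_N[x | to] <| N -> y \in orbit to N x -> 'C_N[y | to] = 'C_N[x | to].
Proof.
move=> /andP[_ nCN] /orbitP[n Nn <-].
by rewrite astab1_act -[in LHS](conjGid Nn) -conjIg (normP (subsetP nCN n Nn)).
Qed.

Lemma stab_normal_of_der1 N D x :
  N^`(1) \subset 'C(D | to) -> x \in D -> 'C_N[x | to] <| N.
Proof.
move=> sN'C Dx; apply: sub_der1_normal (subsetIl _ _).
by rewrite subsetI der_sub (subset_trans sN'C) // astabS // sub1set.
Qed.

Lemma sharply_transitive_orbit N X x :
    'C_N[x | to] <| N -> X \subset N -> #|X| = #|N : 'C_N[x | to]| ->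
    {in X &, injective (rcoset 'C_N[x | to])} ->
  sharply_transitive to N (orbit to N x) X.
Proof.
move=> nCN sXN cardX injX; split; rewrite ?card_orbit //.
by move=> y Ny; apply: (act_inj_rcoset_stab sXN); rewrite (stab_orbit_normal nCN Ny).
Qed.

Lemma setact_orbit_norm N g x :
  g \in 'N(N) -> to^* (orbit to N x) g = orbit to N (to x g).
Proof. by move=> nNg; rewrite setact_orbit (normP nNg). Qed.

Section Blocks.
Variables (G N : {group gT}) (D : {set T}).
Hypotheses (nsNG : N <| G) (trGD : [transitive G, on D | to]).
Let sNG := normal_sub nsNG.
Let nNG := normal_norm nsNG.

Lemma card_orbit_normal x y :
  x \in D -> y \in D -> #|orbit to N x| = #|orbit to N y|.
Proof.
move=> Dx Dy; have [g Gg ->] := atransP2 trGD Dx Dy.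
by rewrite -setact_orbit_norm ?(subsetP nNG) // card_setact.
Qed.

Lemma card_orbit_partition x :
  x \in D -> #|D| = (#|orbit to N @: D| * #|orbit to N x|)%N.
Proof.
move=> Dx; apply: card_uniform_partition.
  by move=> _ /imsetP[y Dy ->]; apply: card_orbit_normal.
exact/orbit_partition/(subset_trans sNG (atrans_acts trGD)).
Qed.

Lemma transitive_orbits : [transitive G, on orbit to N @: D | to^*].
Proof.
have /imsetP[x0 Dx0 _] := trGD.
apply/imsetP; exists (orbit to N x0); first exact: imset_f.
apply/setP => A; apply/imsetP/orbitP => [[x Dx ->] | [g Gg <-]].
  have [g Gg ->] := atransP2 trGD Dx0 Dx.
  by exists g; rewrite //= setact_orbit_norm ?(subsetP nNG).
exists (to x0 g); last by rewrite /= setact_orbit_norm ?(subsetP nNG).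
by rewrite (actsP (atrans_acts trGD)).
Qed.

Lemma sharply_transitive_mul S X :
    sharply_transitive to^* G (orbit to N @: D) S ->
    {in D, forall x, sharply_transitive to N (orbit to N x) X} ->
  sharply_transitive to G D (S * X).
Proof.
move=> [sSG cardS injS] stX.
have actsGD := atrans_acts trGD; have /imsetP[x0 Dx0 _] := trGD.
have [sXN cardX _] := stX x0 Dx0.
have key s t a b x : s \in S -> t \in S -> a \in X -> b \in X -> x \in D ->
    to x (s * a) = to x (t * b) -> s = t /\ a = b.
  move=> Ss St Xa Xb Dx; rewrite !actM => E.
  have st : s = t.
    apply: (injS (orbit to N x)) => //; first exact: imset_f.
    rewrite /= !setact_orbit_norm ?(subsetP nNG) ?(subsetP sSG) //.
    by rewrite -(orbit_act _ _ (subsetP sXN a Xa)) E orbit_act ?(subsetP sXN b Xb).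
  rewrite -st in E; split=> //.
  have Dxs : to x s \in D by rewrite (actsP actsGD) ?(subsetP sSG).
  by have [_ _ injX] := stX _ Dxs; apply: injX (orbit_refl _ _ _) a b Xa Xb E.
split.
- by rewrite mul_subG // (subset_trans sXN sNG).
- rewrite -[S * X]/[set s * a | s in S, a in X] curry_imset2X card_in_imset.
    by rewrite cardsX cardS cardX (card_orbit_partition Dx0).
  move=> [s a] [t b] /setXP[Ss Xa] /setXP[St Xb] /= E.
  by have [-> ->] := key s t a b x0 Ss St Xa Xb Dx0 (congr1 (to x0) E).
by move=> x Dx _ _ /imset2P[s a Ss Xa ->] /imset2P[t b St Xb ->] /key[] // -> ->.
Qed.

Lemma card_orbits_lt : ~~ (N \subset 'C(D | to)) -> #|orbit to N @: D| < #|D|.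
Proof.
case/subsetPn=> u Nu uC.
have [z Dz zu] : exists2 z, z \in D & to z u != z.
  apply/exists_inP; apply: contraNT uC => /exists_inPn fixD.
  by apply/astabP => z Dz; apply/eqP/negbNE/fixD.
have orbit_z_gt1 : 1 < #|orbit to N z|.
  rewrite (cardsD1 z) orbit_refl ltnS card_gt0; apply/set0Pn; exists (to z u).
  by rewrite !inE zu mem_orbit.
rewrite (card_orbit_partition Dz) ltn_Pmulr // card_gt0.
by apply/set0Pn; exists (orbit to N z); apply: imset_f.
Qed.

Lemma sharply_transitive_two_orbits a b :
    N^`(1) \subset 'C(D | to) -> a \in D -> b \in D ->
    D \subset orbit to N a :|: orbit to N b ->
  exists S, sharply_transitive to G D S.
Proof.
move=> sN'C Da Db sDab.
have [nsCa nsCb] := (stab_normal_of_der1 sN'C Da, stab_normal_of_der1 sN'C Db).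
have index_ab : #|N : 'C_N[a | to]| = #|N : 'C_N[b | to]|.
  by rewrite -!card_orbit; apply: card_orbit_normal.
have card_ab : #|'C_N[a | to]| = #|'C_N[b | to]|.
  apply/eqP; rewrite -(eqn_pmul2r (indexg_gt0 N 'C_N[a | to])) {2}index_ab.
  by rewrite !Lagrange ?subsetIl.
have [X sXN [cardX injXa injXb]] := common_rtransversal nsCa nsCb card_ab.
have stX : {in D, forall x, sharply_transitive to N (orbit to N x) X}.
  move=> x /(subsetP sDab)/setUP[] /orbit_eqP ->.
    exact: sharply_transitive_orbit.
  by apply: sharply_transitive_orbit; rewrite -?index_ab.
have orbitsE : orbit to N @: D = [set orbit to N a; orbit to N b].
  apply/eqP; rewrite eqEsubset andbC subUset !sub1set !imset_f //=.
  apply/subsetP => _ /imsetP[x Dx ->]; rewrite !inE.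
  by case/setUP: (subsetP sDab x Dx) => /orbit_eqP ->; rewrite eqxx ?orbT.
have trGO : [transitive G, on [set orbit to N a; orbit to N b] | to^*].
  by rewrite -orbitsE; apply: transitive_orbits.
have [S stS] := sharply_transitive_pair trGO.
by exists (S * X); apply: sharply_transitive_mul; rewrite // orbitsE.
Qed.

Lemma sharply_transitive_semiregular S :
    {in D, forall x, 'C_N[x | to] \subset 'C(D | to)} ->
    sharply_transitive to^* G (orbit to N @: D) S ->
  exists S, sharply_transitive to G D S.
Proof.
move=> semireg stS.
have stabE x : x \in D -> 'C_N[x | to] = 'C_N(D | to).
  move=> Dx; apply/eqP; rewrite eqEsubset subsetI subsetIl semireg //=.
  by rewrite setIS // astabS // sub1set.
have nsKN : 'C_N(D | to) <| N.
  exact: normalGI (subset_trans sNG (atrans_acts trGD)) (astab_normal _ _).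
have [X sXN [cardX injX]] := rtransversal_exists (normal_sub nsKN).
exists (S * X); apply: sharply_transitive_mul => // x Dx.
by apply: sharply_transitive_orbit; rewrite ?(stabE x Dx).
Qed.

End Blocks.
End NormalSubgroupOrbits.

Section ArcTransitiveGraph.
Variables (gT : finGroupType) (G : {group gT}) (p : nat).
Hypothesis p_pr : prime p.

Record arc_transitive_graph (T : finType) (to : {action gT &-> T})
    (D : {set T}) (e : rel T) : Prop := ArcTransitiveGraph {
  edge_dom : forall x y, e x y -> x \in D;
  edge_irr : irreflexive e;
  edge_sym : symmetric e;
  graph_connect : {in D &, forall x y, connect e x y};
  graph_valency : {in D, forall x, #|[set y | e x y]| = p};
  graph_aut : forall g, g \in G -> forall x y, e (to x g) (to y g) = e x y;
  graph_arc_transitive : forall u v x y, e u v -> e x y ->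
    exists2 g, g \in G & to u g = x /\ to v g = y
}.

Section Graph.
Variables (T : finType) (to : {action gT &-> T}) (D : {set T}) (e : rel T).
Hypothesis gr : arc_transitive_graph to D e.

Lemma edge_domr x y : e x y -> y \in D.
Proof. by rewrite (edge_sym gr) => /(edge_dom gr). Qed.

Lemma neighbour_exists x : x \in D -> exists y, e x y.
Proof.
move=> Dx; have : 0 < #|[set y | e x y]| by rewrite (graph_valency gr Dx) prime_gt0.
by case/card_gt0P => y; rewrite inE; exists y.
Qed.

Lemma graph_autV g x y : g \in G -> e (to x g) y = e x (to y g^-1).
Proof. by move=> Gg; rewrite -(graph_aut gr (groupVr Gg)) actK. Qed.

Lemma graph_acts : [acts G, on D | to].
Proof.
have GD g x : g \in G -> x \in D -> to x g \in D.
  move=> Gg /neighbour_exists[y exy].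
  by have /(edge_dom gr) : e (to x g) (to y g) by rewrite (graph_aut gr).
apply/actsP => g Gg x; apply/idP/idP; last exact: GD.
by move/(GD _ _ (groupVr Gg)); rewrite actK.
Qed.

Lemma graph_transitive x0 : x0 \in D -> [transitive G, on D | to].
Proof.
move=> Dx0; suff <- : orbit to G x0 = D by apply: atrans_orbit.
apply/setP => y; apply/orbitP/idP => [[g Gg <-] | Dy].
  by rewrite (actsP graph_acts).
have [[x' ex] [y' ey]] := (neighbour_exists Dx0, neighbour_exists Dy).
by have [g Gg [<- _]] := graph_arc_transitive gr ex ey; exists g.
Qed.

Lemma graph_not_fixed x : x \in D -> ~~ (G \subset 'C(D | to)).
Proof.
move=> Dx; have [y exy] := neighbour_exists Dx.
have [g Gg [gx _]] := graph_arc_transitive gr exy (etrans (edge_sym gr y x) exy).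
apply/subsetPn; exists g => //; apply/astabP => /(_ x Dx).
by rewrite gx => yx; move: exy; rewrite yx (edge_irr gr).
Qed.

Lemma connected_sub (U : {set T}) x : x \in D -> x \in U ->
  (forall w w', w \in U -> e w w' -> w' \in U) -> D \subset U.
Proof.
move=> Dx Ux closedU; apply/subsetP => z Dz.
have /connectP[s pth ->] := graph_connect gr Dx Dz.
elim: s x Ux {Dx} pth => //= a s IH x Ux /andP[exa pth].
exact: IH (closedU _ _ Ux exa) pth.
Qed.

Section NormalQuotient.
Variable N : {group gT}.
Hypothesis nsNG : N <| G.
Local Notation B := (orbit to N).

Lemma orbit_graph_act g x : g \in G -> B (to x g) = to^* (B x) g.
Proof. by move=> Gg; rewrite setact_orbit_norm // (subsetP (normal_norm nsNG)). Qed.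

Lemma edge_in_orbit_cover x y : e x y -> B x = B y -> D \subset B x.
Proof.
move=> exy Bxy; apply: connected_sub (edge_dom gr exy) (orbit_refl _ _ _) _.
move=> _ w' /orbit_eqP <- /(graph_arc_transitive gr exy)[g Gg [<- <-]].
by rewrite orbit_graph_act // Bxy mem_setact ?orbit_refl.
Qed.

Lemma neighbours_in_orbit x y y' : e x y -> e x y' -> y != y' -> B y = B y' ->
  {subset [set w | e x w] <= B y}.
Proof.
move=> exy exy' yy' Byy'; set Nx := [set w | e x w].
pose class u := [set w in Nx | B u == B w].
have class_act g u : g \in G -> to x g = x -> to^* (class u) g \subset class (to u g).
  move=> Gg gx; apply/subsetP => _ /imsetP[w /setIdP[Nxw /eqP Buw] ->].
  move: Nxw; rewrite !inE => exw.
  by rewrite -{1}gx (graph_aut gr Gg) exw !orbit_graph_act // Buw eqxx.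
have class_card z : z \in Nx -> #|class z| = #|class y|.
  rewrite inE => exz; have [g Gg [gx gy]] := graph_arc_transitive gr exy exz.
  have g'x : to x g^-1 = x by rewrite -{1}gx actK.
  have g'z : to z g^-1 = y by rewrite -gy actK.
  have le_zy : #|class z| <= #|class y|.
    by rewrite -(card_setact to _ g^-1) subset_leq_card // -g'z class_act ?groupV.
  have le_yz : #|class y| <= #|class z|.
    by rewrite -(card_setact to _ g) subset_leq_card // -gy class_act.
  by apply/eqP; rewrite eqn_leq le_zy le_yz.
(* The stabiliser of x permutes the classes transitively, so they all have the
   size of class y, which thus divides the prime p. *)
have card_Nx : #|Nx| = (#|preim_partition B Nx| * #|class y|)%N.
  apply: card_uniform_partition (preim_partitionP B Nx).
  by move=> _ /imsetP[z Nxz ->]; apply: class_card.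
have class_gt1 : 1 < #|class y|.
  rewrite (cardsD1 y) !inE exy eqxx ltnS card_gt0; apply/set0Pn; exists y'.
  by rewrite !inE eq_sym yy' exy' Byy' eqxx.
have class_Nx : class y = Nx.
  have sub : class y \subset Nx by apply/subsetP => w /setIdP[].
  apply/eqP; rewrite eqEcard sub (graph_valency gr (edge_dom gr exy)).
  have : #|class y| %| p by rewrite -(graph_valency gr (edge_dom gr exy)) card_Nx dvdn_mull.
  by move/(prime_nt_dvdP p_pr); rewrite (gtn_eqF class_gt1) => /(_ isT) ->; rewrite leqnn.
by move=> w; rewrite -class_Nx inE => /andP[_ /eqP ->]; apply: orbit_refl.
Qed.

Lemma neighbours_sub_orbit v c u : {subset [set w | e v w] <= B c} ->
  u \in B v -> {subset [set w | e u w] <= B c}.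
Proof.
move=> sub /orbitP[n Nn <-] w; rewrite inE graph_autV ?(subsetP (normal_sub nsNG)) // => evw.
by rewrite -(orbit_actr _ _ _ (groupVr Nn)) sub // inE.
Qed.

Hypothesis not_two_orbits : forall a b, a \in D -> b \in D -> ~~ (D \subset B a :|: B b).

Lemma neighbour_orbit_inj x y y' : e x y -> e x y' -> B y = B y' -> y = y'.
Proof.
move=> exy exy' Byy'; apply/eqP/negPn/negP => yy'.
(* Otherwise the orbits of x and y would swallow each other's neighbourhoods and
   cover the connected graph. *)
have sub_x := neighbours_in_orbit exy exy' yy' Byy'.
have sub_y : {subset [set w | e y w] <= B x}.
  have [g Gg [gx gy]] := graph_arc_transitive gr exy (etrans (edge_sym gr y x) exy).
  move=> w; rewrite inE -gx graph_autV // => exw.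
  have : to w g^-1 \in B y by apply: sub_x; rewrite inE.
  by move/(mem_setact to g); rewrite actKV -orbit_graph_act // gy.
case/negP: (not_two_orbits (edge_dom gr exy) (edge_domr exy)).
apply: (connected_sub (edge_dom gr exy)); first by rewrite inE orbit_refl.
move=> w w' /setUP[] Bw eww'; rewrite inE.
  by rewrite (neighbours_sub_orbit sub_x Bw) ?orbT // inE.
by rewrite (neighbours_sub_orbit sub_y Bw) // inE.
Qed.

Lemma stab_sub_kernel x : x \in D -> 'C_N[x | to] \subset 'C(D | to).
Proof.
move=> Dx; apply/subsetP => n /setIP[Nn /astab1P xn]; apply/astabP => z Dz.
have Gn := subsetP (normal_sub nsNG) n Nn.
have : D \subset [set z | to z n == z].
  apply: (connected_sub Dx); first by rewrite inE xn.
  move=> w w'; rewrite !inE => /eqP wn eww'; apply/eqP/esym.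
  by apply: (neighbour_orbit_inj eww'); rewrite ?orbit_act // -{1}wn (graph_aut gr Gn).
by move/subsetP/(_ z Dz); rewrite inE => /eqP.
Qed.

Definition quotient_rel (A C : {set T}) : bool :=
  [exists x, exists y, [&& e x y, A == B x & C == B y]].

Lemma quotient_relP A C :
  reflect (exists x y, [/\ e x y, A = B x & C = B y]) (quotient_rel A C).
Proof.
apply: (iffP existsP) => [[x /existsP[y /and3P[exy /eqP-> /eqP->]]] | [x [y [exy -> ->]]]].
  by exists x, y.
by exists x; apply/existsP; exists y; rewrite exy !eqxx.
Qed.

Lemma quotient_rel_act g A C : g \in G ->
  quotient_rel A C -> quotient_rel (to^* A g) (to^* C g).
Proof.
move=> Gg /quotient_relP[x [y [exy -> ->]]]; apply/quotient_relP.
by exists (to x g), (to y g); rewrite (graph_aut gr) // !orbit_graph_act.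
Qed.

Lemma quotient_arc_transitive_graph :
  arc_transitive_graph to^* (B @: D) quotient_rel.
Proof.
split.
- by move=> _ _ /quotient_relP[x [y [exy -> _]]]; rewrite imset_f // (edge_dom gr exy).
- move=> A; apply/negbTE/negP => /quotient_relP[x [y [exy -> Bxy]]].
  have Dx := edge_dom gr exy.
  by case/negP: (not_two_orbits Dx Dx); rewrite setUid (edge_in_orbit_cover exy).
- by move=> A C; apply/quotient_relP/quotient_relP => -[x [y [exy -> ->]]];
    exists y, x; rewrite (edge_sym gr).
- move=> _ _ /imsetP[a Da ->] /imsetP[c Dc ->].
  have /connectP[s pth ->] := graph_connect gr Da Dc.
  elim: s a Da pth => //= b s IH a Da /andP[eab pth].
  apply: connect_trans (IH b (edge_domr eab) pth); apply: connect1.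
  by apply/quotient_relP; exists a, b.
- move=> _ /imsetP[a Da ->].
  suff -> : [set C | quotient_rel (B a) C] = B @: [set y | e a y].
    rewrite card_in_imset ?(graph_valency gr Da) // => y y'; rewrite !inE.
    exact: neighbour_orbit_inj.
  apply/setP => C; rewrite inE; apply/quotient_relP/imsetP => [[x [y [exy Bax ->]]] | [y]].
    have /orbitP[n Nn xE] : x \in B a by rewrite Bax orbit_refl.
    exists (to y n^-1); first by rewrite inE -graph_autV ?(subsetP (normal_sub nsNG)) // xE.
    by rewrite orbit_act ?groupV.
  by rewrite inE => eay ->; exists a, y.
- move=> g Gg A C /=; apply/idP/idP; last exact: quotient_rel_act.
  by move/(quotient_rel_act (groupVr Gg)); rewrite !actKin ?inE.
- move=> _ _ _ _ /quotient_relP[x [y [exy -> ->]]] /quotient_relP[x' [y' [exy' -> ->]]].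
  have [g Gg [<- <-]] := graph_arc_transitive gr exy exy'.
  by exists g; rewrite // !orbit_graph_act.
Qed.

End NormalQuotient.
End Graph.

Hypothesis solG : solvable G.

Lemma arc_transitive_graph_sharply_transitive (T : finType) (to : {action gT &-> T})
    (D : {set T}) (e : rel T) :
  arc_transitive_graph to D e -> exists S, sharply_transitive to G D S.
Proof.
have [n] := ubnP #|D|; elim: n => // n IH in T to D e *; rewrite ltnS => leDn gr.
have [-> | [x0 Dx0]] := set_0Vmem D.
  by exists set0; split; rewrite ?sub0set ?cards0 // => x; rewrite inE.
have trGD := graph_transitive gr Dx0.
have [N nsNG [ntN sN'C]] := solvable_normal_der1_sub solG (graph_not_fixed gr Dx0).
case: (boolP [exists a in D, exists b in D, D \subset orbit to N a :|: orbit to N b]).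
  case/exists_inP=> a Da /exists_inP[b Db sDab].
  exact: sharply_transitive_two_orbits sN'C Da Db sDab.
move/exists_inPn=> not_two.
have {}not_two a b : a \in D -> b \in D -> ~~ (D \subset orbit to N a :|: orbit to N b).
  by move=> Da Db; apply: contra (not_two a Da) => sD; apply/exists_inP; exists b.
have [S stS] := IH _ _ _ _ (leq_trans (card_orbits_lt nsNG trGD ntN) leDn)
  (quotient_arc_transitive_graph gr nsNG not_two).
apply: (sharply_transitive_semiregular nsNG trGD _ stS) => x Dx.
exact: (stab_sub_kernel gr nsNG not_two Dx).
Qed.

End ArcTransitiveGraph.

Theorem proposition4p1 (p : nat) (V : finType) (e : rel V)
    (G : {group {perm V}}) :
  prime p ->
  simple_graph e ->
  graph_connected e ->
  regular_of_valency e p ->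
  automorphism_group e G ->
  solvable G ->
  arc_transitive_on e G ->
  EKR_property G.
Proof.
move=> p_pr [irr sym] conn val aut solG arc.
have gr : arc_transitive_graph G p 'P [set: V] e.
  by split=> // [x y _ | x y _ _ | x _ | g Gg x y]; rewrite ?inE ?aut.
have [S stS] := arc_transitive_graph_sharply_transitive p_pr solG gr.
exact: sharply_transitive_EKR stS.
Qed.
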